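(* Let $\Omega$ be a topological space and $X$ a Hausdorff locally convex topological vector space over $\mathbb{C}$. Let $A \subset C(\Omega, \mathbb{C})$, $f \in F(\Omega, X)$, $v \in F(\Omega, \mathbb{R}_+)$. Suppose that $\overline{(vf)(\Omega)}$ is compact and $vf$ is continuous on $\mathrm{supp}\, v$ (respectively, $\overline{f(\mathrm{supp}\, v)}$ is compact and $f$ is continuous on $\mathrm{supp}\, v$). If $A$ $\beta$-separates disjoint Lebesgue sets of $vf$ (respectively, of $f$) in $\mathrm{supp}\, v$, then for any $(A, v)$-antisymmetric $z$-filter $\mathcal{F}$ on $\Omega$, the set $\bigcap_{F \in \mathcal{F}} \overline{(vf)(F \cap \mathrm{supp}\, v)}$ (respectively, $\bigcap_{F \in \mathcal{F}} \overline{f(F \cap \mathrm{supp}\, v)}$) consists of a single point.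
   Context: Topological spaces are not assumed Hausdorff. $vf(x)=v(x)f(x)$; $\mathrm{supp}\,v$ is the closure of $\{v\neq0\}$. $X^*$ is the space of continuous linear functionals $X\to\mathbb{C}$, $\Re$ the real part. A zero-set is $h^{-1}(0)$ with $h\in C(\Omega,\mathbb{R})$; a $z$-filter is a nonempty family $\mathcal{F}$ of zero-sets with $\emptyset\notin\mathcal{F}$, closed under finite intersections and under passing to larger zero-sets. $\mathcal{F}$ is $(A,v)$-antisymmetric if every $F\in\mathcal{F}$ meets $\mathrm{supp}\,v$ and, for each $\phi\in A$ with $\bigcap_{F\in\mathcal{F}}\overline{\phi(F\cap\mathrm{supp}\,v)}\subset[0,1]$ (closures in $\mathbb{C}\cup\{\infty\}$), this intersection is a single point. For $h\in F(\Omega,X)$, $A$ ''$\beta$-separates disjoint Lebesgue sets of $h$ in $\mathrm{supp}\,v$'' means: for any $(A,v)$-antisymmetric $z$-filter $\mathcal{F}$, any $e^*\in X^*$ and $a<b$ real, there is $F\in\mathcal{F}$ with $F\cap L_a=\emptyset$ or $F\cap L^b=\emptyset$, where $L_a=\{x\in\mathrm{supp}\,v:\Re e^*(h(x))\le a\}$, $L^b=\{x\in\mathrm{supp}\,v:\Re e^*(h(x))\ge b\}$. *)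

From HB Require Import structures.
From mathcomp Require Import all_boot all_order all_algebra.
From mathcomp Require Import all_classical all_reals all_analysis.
From mathcomp.real_closed Require Import complex.
Import numFieldTopology.Exports numFieldNormedType.Exports.

Set Implicit Arguments.
Unset Strict Implicit.
Unset Printing Implicit Defensive.
Import Order.TTheory GRing.Theory Num.Theory.

Local Open Scope classical_set_scope.
Local Open Scope ring_scope.

(* The usual (norm) topology on the complex numbers R[i]. *)
HB.instance Definition _ (R : realType) := PseudoPointedMetric.copy R[i] (R[i])^o.

Section defs.
Context {R : realType} {Omega : topologicalType}.

Definition suppv (v : Omega -> R) : set Omega := closure [set x | v x != 0].

Definition zero_set (Z : set Omega) : Prop :=
  exists h : Omega -> R, continuous h /\ Z = h @^-1` [set 0].

Definition z_filter (FF : set (set Omega)) : Prop :=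
  [/\ FF !=set0,
      (forall F, FF F -> zero_set F),
      ~ FF set0,
      (forall F G, FF F -> FF G -> FF (F `&` G)) &
      (forall F G, FF F -> zero_set G -> F `<=` G -> FF G)].

(* The Riemann sphere C u {oo} as the one-point compactification of C;
   a point z of C is [Some z], oo is [None]. *)
Definition riemann_sphere := one_point_compactification R[i].

Definition unit_seg_sphere : set riemann_sphere :=
  [set z | exists r : R, 0 <= r <= 1 /\ z = Some (r%:C)%C].

Definition antisymmetric_zfilter (A : set (Omega -> R[i])) (v : Omega -> R)
    (FF : set (set Omega)) : Prop :=
  [/\ z_filter FF,
      (forall F, FF F -> F `&` suppv v !=set0) &
      (forall phi, A phi ->
        \bigcap_(F in FF)
            closure (Some @` (phi @` (F `&` suppv v)) : set riemann_sphere)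
          `<=` unit_seg_sphere ->
        exists p : riemann_sphere,
          \bigcap_(F in FF)
            closure (Some @` (phi @` (F `&` suppv v)) : set riemann_sphere)
          = [set p])].

Definition is_dual {X : tvsType R[i]} (e : X -> R[i]) : Prop :=
  continuous e /\ (forall (a : R[i]) (x y : X), e (a *: x + y) = a * e x + e y).

Definition beta_separates {X : tvsType R[i]} (A : set (Omega -> R[i]))
    (v : Omega -> R) (h : Omega -> X) : Prop :=
  forall FF, antisymmetric_zfilter A v FF ->
  forall e : X -> R[i], is_dual e ->
  forall a b : R, a < b ->
  exists2 F, FF F &
    (F `&` [set x | suppv v x /\ complex.Re (e (h x)) <= a] = set0 \/
     F `&` [set x | suppv v x /\ b <= complex.Re (e (h x))] = set0).

End defs.

Definition vmul {R : realType} {Omega : Type} {X : lmodType R[i]}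
  (v : Omega -> R) (f : Omega -> X) : Omega -> X :=
  fun x => ((v x)%:C)%C *: f x.

(* The sets [h (F `&` supp v)], [F] in [FF], form a filter base inside a compact
   set, so their closures have a common point.  Two distinct common points [p],
   [q] would be separated by a continuous functional [e] with
   [Re (e (q - p)) >= 1]; for [a = Re (e p) + 1/3] and [b = Re (e p) + 2/3],
   beta-separation yields [F] in [FF] missing [L_a] or [L^b], whereas [p] (resp.
   [q]) being adherent to [h (F `&` supp v)] puts a point of [F] in [L_a] (resp.
   [L^b]).
   The functional is the complexification [y |-> f y - i f (i y)] of a
   real-linear [f] given by Hahn-Banach applied to the gauge of a convex
   neighbourhood of [0] avoiding [q - p]; Hahn-Banach itself follows from Zorn's
   lemma, since a minimal sublinear functional below a given one is linear. *)

From HB Require Import structures.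
From mathcomp Require Import all_boot all_order all_algebra.
From mathcomp Require Import all_classical all_reals all_analysis.
From mathcomp.real_closed Require Import complex.
From mathcomp Require Import ring lra.
Import numFieldTopology.Exports numFieldNormedType.Exports.
Set Implicit Arguments.
Unset Strict Implicit.
Unset Printing Implicit Defensive.
Import Order.TTheory GRing.Theory Num.Theory.
Local Open Scope classical_set_scope.
Local Open Scope ring_scope.

Lemma inf_le_mul (R : realType) (S1 S2 : set R) (l : R) :
  0 < l -> S1 !=set0 -> has_lbound S2 ->
  (forall s, S1 s -> S2 (l * s)) -> inf S2 <= l * inf S1.
Proof.
move=> l0 S1_neq0 S2_lb S12; rewrite -ler_pdivrMl //.
apply: lb_le_inf => // s S1s; rewrite ler_pdivrMl //.
exact/ge_inf/S12.
Qed.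

Section Sublinear.
Variables (R : realType) (V : lmodType R[i]).

Definition sublinear (p : V -> R) :=
  (forall x y, p (x + y) <= p x + p y) /\
  (forall (t : R) x, 0 < t -> p (t%:C%C *: x) = t * p x).

Definition real_linear (f : V -> R) :=
  (forall x y, f (x + y) = f x + f y) /\
  (forall (t : R) x, f (t%:C%C *: x) = t * f x).

Lemma sublinear0 p : sublinear p -> p 0 = 0.
Proof. by move=> [_ pZ]; have := pZ 2 0 (ltr0Sn _ 1); rewrite scaler0; lra. Qed.

Lemma sublinearZ p (t : R) x :
  sublinear p -> 0 <= t -> p (t%:C%C *: x) = t * p x.
Proof.
move=> sp; rewrite le_eqVlt => /predU1P[<-|]; last exact: sp.2.
by rewrite mul0r rmorph0 scale0r sublinear0.
Qed.

Lemma sublinearN_ge p x : sublinear p -> - p (- x) <= p x.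
Proof. by move=> sp; have := sp.1 x (- x); rewrite subrr sublinear0 //; lra. Qed.

Lemma sublinear_inf (S : V -> set R) :
  (forall y, S y !=set0) -> (forall y, has_lbound (S y)) ->
  (forall mu y s, 0 < mu -> S y s -> S (mu%:C%C *: y) (mu * s)) ->
  (forall y w s t, S y s -> S w t -> exists2 u, S (y + w) u & u <= s + t) ->
  sublinear (fun y => inf (S y)).
Proof.
move=> S_neq0 S_lb SZ SD; split=> [y w|t y t0].
  have infD_le s : S y s -> inf (S (y + w)) - s <= inf (S w).
    move=> Sys; apply: lb_le_inf => // t Swt.
    have [u Su us] := SD _ _ _ _ Sys Swt.
    by have := ge_inf (S_lb (y + w)) Su; lra.
  suff : inf (S (y + w)) - inf (S w) <= inf (S y) by lra.
  by apply: lb_le_inf => // s Sys; have := infD_le s Sys; lra.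
apply/eqP; rewrite eq_le; apply/andP; split.
  by apply: inf_le_mul => // s Ss; apply: SZ.
rewrite -ler_pdivlMl //.
have -> : inf (S y) = inf (S (t^-1%:C%C *: (t%:C%C *: y))).
  by rewrite scalerA -rmorphM mulVf ?gt_eqF // rmorph1 scale1r.
by apply: inf_le_mul; rewrite ?invr_gt0 // => s Ss; apply: SZ; rewrite ?invr_gt0.
Qed.

Definition tilt (m : V -> R) (x : V) (c : R) (y : V) :=
  inf [set m (y + t%:C%C *: x) - t * c | t in [set t : R | 0 <= t]].

Section Tilt.
Variables (m : V -> R) (x : V) (c : R).
Hypotheses (sm : sublinear m) (cm : c <= m x).

Let tilt_lb y :
  has_lbound [set m (y + t%:C%C *: x) - t * c | t in [set t : R | 0 <= t]].
Proof.
exists (- m (- y)) => _ [t t0 <-].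
have := sm.1 (y + t%:C%C *: x) (- y); rewrite addrC addKr sublinearZ //.
have : t * c <= t * m x by rewrite ler_wpM2l.
lra.
Qed.

Let tilt_at y t : 0 <= t -> tilt m x c y <= m (y + t%:C%C *: x) - t * c.
Proof. by move=> t0; apply: (ge_inf (tilt_lb y)); exists t. Qed.

Lemma tilt_sublinear : sublinear (tilt m x c).
Proof.
apply: sublinear_inf => [y|y|mu y _ mu0 [t t0 <-]|y w _ _ [s s0 <-] [t t0 <-]].
- by exists (m (y + 0%:C%C *: x) - 0 * c) => /=; exists 0.
- exact: tilt_lb.
- exists (mu * t) => /=; first by rewrite mulr_ge0 // ltW.
  by rewrite mulrBr -(sublinearZ _ sm (ltW mu0)) scalerDr scalerA -rmorphM mulrA.
- exists (m ((y + w) + (s + t)%:C%C *: x) - (s + t) * c).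
    by exists (s + t) => //=; rewrite addr_ge0.
  rewrite rmorphD scalerDl addrACA.
  by have := sm.1 (y + s%:C%C *: x) (w + t%:C%C *: x); lra.
Qed.

Lemma tilt_le y : tilt m x c y <= m y.
Proof. by have := tilt_at y (lexx 0); rewrite rmorph0 scale0r addr0 mul0r subr0. Qed.

Lemma tiltN_le : tilt m x c (- x) <= - c.
Proof.
by have := tilt_at (- x) ler01; rewrite rmorph1 scale1r addNr sublinear0 // mul1r sub0r.
Qed.

End Tilt.

Section MinimalSublinear.
Variables (p : V -> R) (sp : sublinear p).

Definition sublinear_below := {q : V -> R | sublinear q /\ (forall x, q x <= p x)}.

Definition ge_sublinear (a b : sublinear_below) : bool :=
  `[< forall x, sval b x <= sval a x >].

Lemma exists_minimal_sublinear : exists m, premaximal ge_sublinear m.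
Proof.
pose p_below : sublinear_below := exist _ p (conj sp (fun x => lexx _)).
apply: (ZL_preorder p_below) => [t|a b c /asboolP ab /asboolP bc|Q Qtot].
- by apply/asboolP.
- by apply/asboolP => x; exact: le_trans (bc x) (ab x).
have [[q0 Qq0]|Q0] := pselect (Q !=set0); last first.
  by exists p_below => s Qs; exfalso; apply: Q0; exists s.
pose S y := [set sval q y | q in Q].
have S_lb y : has_lbound (S y).
  exists (- p (- y)) => _ [q _ <-]; have [sq qp] := svalP q.
  by have := sublinearN_ge y sq; have := qp (- y); lra.
have sinf : sublinear (fun y => inf (S y)).
  apply: sublinear_inf => // [y|mu y _ mu0 [q Qq <-]|y w _ _ [q1 Q1 <-] [q2 Q2 <-]].
  - by exists (sval q0 y); exists q0.
  - by exists q => //; rewrite (svalP q).1.2.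
  - have [sq1 _] := svalP q1; have [sq2 _] := svalP q2.
    have [/asboolP q21|/asboolP q12] := Qtot q1 q2 Q1 Q2.
    + exists (sval q2 (y + w)); first by exists q2.
      by have := sq2.1 y w; have := q21 y; lra.
    + exists (sval q1 (y + w)); first by exists q1.
      by have := sq1.1 y w; have := q12 w; lra.
have inf_le_p x : inf (S x) <= p x.
  apply: le_trans ((svalP q0).2 x).
  by apply: (ge_inf (S_lb x)); exists q0.
exists (exist _ (fun y => inf (S y)) (conj sinf inf_le_p)) => q Qq.
by apply/asboolP => x /=; apply: (ge_inf (S_lb x)); exists q.
Qed.

Section Minimal.
Variables (m : sublinear_below) (m_min : premaximal ge_sublinear m).

(* Tilting [m] at [x] with slope [m x] stays below [m], so by minimality it
   equals [m]; evaluating at [- x] gives [m (- x) <= - m x]. *)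
Lemma minimal_sublinearN x : sval m (- x) = - sval m x.
Proof.
have [sm mp] := svalP m; have mx_le := lexx (sval m x).
have tilt_le_p y : tilt (sval m) x (sval m x) y <= p y.
  exact: le_trans (tilt_le sm mx_le y) (mp y).
pose t : sublinear_below :=
  exist _ (tilt (sval m) x (sval m x)) (conj (tilt_sublinear sm mx_le) tilt_le_p).
have /m_min/asboolP/= tilt_ge : ge_sublinear m t.
  by apply/asboolP => y; exact: tilt_le.
have := tilt_ge (- x); have := tiltN_le sm mx_le; have := sublinearN_ge x sm.
lra.
Qed.

Lemma minimal_sublinear_linear : real_linear (sval m).
Proof.
have [sm _] := svalP m; split=> [x y|t x].
  apply/eqP; rewrite eq_le sm.1 /=.
  by have := sm.1 (- x) (- y); rewrite -opprD !minimal_sublinearN; lra.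
have [t0|t0] := leP 0 t; first exact: sublinearZ.
have -> : t%:C%C *: x = - ((- t)%:C%C *: x) by rewrite rmorphN scaleNr opprK.
by rewrite minimal_sublinearN sublinearZ ?oppr_ge0 ?ltW //; lra.
Qed.

End Minimal.
End MinimalSublinear.

Lemma hahn_banach (p : V -> R) (x0 : V) : sublinear p ->
  exists2 f, real_linear f & (forall x, f x <= p x) /\ p x0 <= f x0.
Proof.
move=> sp; have px0_le := lexx (p x0).
have [m m_min] := exists_minimal_sublinear (tilt_sublinear sp px0_le).
have [_ mp] := svalP m.
exists (sval m); first exact: minimal_sublinear_linear.
split=> [x|]; first exact: le_trans (mp x) (tilt_le sp px0_le x).
have := mp (- x0); have := tiltN_le sp px0_le.
by rewrite (minimal_sublinearN m_min); lra.
Qed.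

End Sublinear.

Section ComplexReal.
Variable R : realType.

Lemma ReD (x y : R[i]) : complex.Re (x + y) = complex.Re x + complex.Re y.
Proof. exact: (raddfD (@complex.Re R : Rcomplex R -> R)). Qed.

Lemma ReB (x y : R[i]) : complex.Re (x - y) = complex.Re x - complex.Re y.
Proof. exact: (raddfB (@complex.Re R : Rcomplex R -> R)). Qed.

Lemma normcR (r : R) : `|r%:C%C| = `|r|%:C%C :> R[i].
Proof. by rewrite normc_def /= expr0n addr0 sqrtr_sqr. Qed.

Lemma gtc0_real (e : R[i]) : 0 < e -> e = (complex.Re e)%:C%C /\ 0 < complex.Re e.
Proof. by rewrite ltcE => /andP[/eqP Ime0 ->]; case: e Ime0 => a b /= ->. Qed.

Lemma normc_ltR_Re (x : R[i]) (r : R) : `|x| < r%:C%C -> `|complex.Re x| < r.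
Proof. by move=> /(le_lt_trans (normc_ge_Re x)); rewrite ltcR. Qed.

Lemma normc_realBi_le (a b : R) :
  `|a%:C%C - 'i%C * b%:C%C| <= (`|a| + `|b|)%:C%C :> R[i].
Proof.
apply: le_trans (ler_normB _ _) _.
have normi : `|'i%C| = 1 :> R[i] by rewrite normc_def /= expr0n expr1n add0r sqrtr1.
by rewrite normrM normi !normcR mul1r rmorphD.
Qed.

End ComplexReal.

Section Complexify.
Variables (R : realType) (V : lmodType R[i]).

Definition complexify (f : V -> R) (y : V) : R[i] :=
  (f y)%:C%C - 'i%C * (f ('i%C *: y))%:C%C.

Lemma Re_complexify f y : complex.Re (complexify f y) = f y.
Proof. by rewrite /complexify; simpc. Qed.

Lemma complexify_linear f : real_linear f ->
  forall (a : R[i]) x y, complexify f (a *: x + y) = a * complexify f x + complexify f y.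
Proof.
move=> [fD fZ] [al be] x y; rewrite /complexify scalerDr !fD !rmorphD.
have ab_scale z : (al +i* be)%C *: z = al%:C%C *: z + be%:C%C *: ('i%C *: z).
  by rewrite scalerA -scalerDl; congr (_ *: _); apply/eqP; simpc.
have i_ab_scale : 'i%C *: ((al +i* be)%C *: x) = al%:C%C *: ('i%C *: x) + (- be)%:C%C *: x.
  rewrite ab_scale scalerDr !scalerA rmorphN scaleNr -scaleNr; congr (_ + _ *: _).
    by rewrite mulrC.
  by apply/eqP; simpc.
rewrite i_ab_scale ab_scale !fD !fZ.
by apply/eqP; simpc.
Qed.

End Complexify.

Section LocallyConvex.
Variables (R : realType) (X : tvsType R[i]).

Lemma convex_setR (U : set X) : convex_set (U : set (convex_lmodType X)) ->
  forall (a b : X) (l : R), 0 <= l -> l <= 1 -> U a -> U b ->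
  U (l%:C%C *: a + (1 - l)%:C%C *: b).
Proof.
move=> cU a b l l0 l1 Ua Ub.
have l0' : (0 : R[i]) <= l%:C%C by rewrite lecR.
have l1' : l%:C%C <= (1 : R[i]) by rewrite -(rmorph1 (real_complex R)) lecR.
have := cU a b (Itv01 l0' l1') (mem_set Ua) (mem_set Ub).
by rewrite inE /= rmorphB rmorph1.
Qed.

Lemma nbhs0_absorbing (U : set X) : nbhs 0 U ->
  forall y : X, exists2 r : R, 0 < r & U (r%:C%C *: y).
Proof.
move=> U0 y; have /= := scale_continuous (0, y) U.
rewrite scale0r => /(_ U0)[] /= B [B1 B2] BU.
have [e e0 eB] := (nbhs_ballP _ _).1 B1.
have [eR Re0] := gtc0_real e0.
exists (complex.Re e / 2); first by rewrite divr_gt0.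
apply: (BU ((complex.Re e / 2)%:C%C, y)); split => //=; last exact: nbhs_singleton.
apply: eB; rewrite /ball /= sub0r normrN {2}eR normcR ltcR ger0_norm; first lra.
by rewrite divr_ge0 // ltW.
Qed.

Lemma hausdorff_convex_nbhs0 (hX : hausdorff_space X) (z : X) : z != 0 ->
  exists U : set X, [/\ nbhs 0 U, convex_set (U : set (convex_lmodType X)) & ~ U z].
Proof.
move=> z0; rewrite eq_sym in z0.
have [A [oA A0 Az]] := hausdorff_accessible hX z0.
have [B cB [Bo Bb]] := @locally_convex R[i] X.
have [U [BU U0] UA] : exists2 U, B U /\ U 0 & U `<=` A.
  by apply: Bb; apply: open_nbhs_nbhs; split => //; exact: set_mem.
exists U; split.
- by apply: open_nbhs_nbhs; split => //; exact: Bo.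
- exact/cB/mem_set.
- by move=> /UA; move: Az; rewrite inE.
Qed.

Section Gauge.
Variables (U : set X) (U0 : nbhs 0 U).
Hypothesis cU : convex_set (U : set (convex_lmodType X)).

Definition gauge (y : X) := inf [set t : R | 0 < t /\ U (t^-1%:C%C *: y)].

Let gauge_set_lb y : has_lbound [set t : R | 0 < t /\ U (t^-1%:C%C *: y)].
Proof. by exists 0 => t [t0 _]; exact: ltW. Qed.

Lemma gauge_sublinear : sublinear gauge.
Proof.
apply: sublinear_inf => [y|//|mu y t mu0 [t0 Ut]|y w s t [s0 Us] [t0 Ut]].
- have [r r0 Ur] := nbhs0_absorbing U0 y.
  by exists r^-1; rewrite /= invrK invr_gt0.
- split; first by rewrite mulr_gt0.
  by rewrite scalerA -rmorphM invfM mulrAC mulVf ?gt_eqF // mul1r.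
- have st0 : 0 < s + t by rewrite addr_gt0.
  exists (s + t) => //; split=> //.
  have l0 : 0 <= s / (s + t) by rewrite divr_ge0 // ltW.
  have l1 : s / (s + t) <= 1 by rewrite ler_pdivrMr // mul1r lerDl ltW.
  have := convex_setR cU l0 l1 Us Ut; rewrite !scalerA -!rmorphM.
  have -> : s / (s + t) * s^-1 = (s + t)^-1 by field; rewrite !gt_eqF.
  have -> : (1 - s / (s + t)) * t^-1 = (s + t)^-1 by field; rewrite !gt_eqF.
  by rewrite -scalerDr.
Qed.

Lemma gauge_le1 y : U y -> gauge y <= 1.
Proof.
by move=> Uy; apply: (ge_inf (gauge_set_lb y)); rewrite /= invr1 rmorph1 scale1r.
Qed.

(* [U] contains [0] and is convex, hence star-shaped: [U (t^-1 z)] with [t < 1]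
   would put [z] itself in [U]. *)
Lemma gauge_ge1 z : ~ U z -> 1 <= gauge z.
Proof.
move=> Uz; apply: lb_le_inf => [|t [t0 Ut]].
  have [r r0 Ur] := nbhs0_absorbing U0 z.
  by exists r^-1; rewrite /= invrK invr_gt0.
rewrite leNgt; apply/negP => t1; apply: Uz.
have := convex_setR cU (ltW t0) (ltW t1) Ut (nbhs_singleton U0).
by rewrite scaler0 addr0 scalerA -rmorphM mulfV ?gt_eqF // rmorph1 scale1r.
Qed.

End Gauge.
End LocallyConvex.

Section Dual.
Variables (R : realType) (X : tvsType R[i]).

Lemma complexify_continuous (f : X -> R) : real_linear f ->
  nbhs 0 [set w | `|f w| <= 1] -> continuous (complexify f).
Proof.
move=> f_lin f_le1; have [_ fZ] := f_lin.
have eD u w : complexify f (u + w) = complexify f u + complexify f w.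
  by have := complexify_linear f_lin 1 u w; rewrite scale1r mul1r.
have f_small k : 0 < k -> nbhs 0 [set w | `|f w| <= k].
  move=> k0; have kC : k%:C%C != 0 :> R[i] by rewrite eq_complex /= negb_and gt_eqF.
  apply: filterS (nbhs0Z kC f_le1) => _ [u /= fu <-].
  by rewrite fZ normrM gtr0_norm // ler_piMr // ltW.
have iZ_cont : continuous (fun w : X => 'i%C *: w).
  by move=> w; apply: (cvg_comp2 (cvg_cst _) cvg_id (scale_continuous (_, _))).
have fi_small k : 0 < k -> nbhs 0 [set w | `|f ('i%C *: w)| <= k].
  by move=> k0; apply: (iZ_cont 0 [set y | `|f y| <= k]); rewrite /= scaler0; exact: f_small.
move=> x P /nbhs_ballP [eps eps0 epsP].
have [epsR Reps0] := gtc0_real eps0.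
have k0 : 0 < complex.Re eps / 4 by rewrite divr_gt0.
apply: filterS (nbhsT x (filterI (f_small _ k0) (fi_small _ k0))).
move=> _ [n [/= fn fin] <-]; apply: epsP.
rewrite /ball /= eD opprD addrA subrr add0r normrN.
apply: le_lt_trans (normc_realBi_le _ _) _; rewrite epsR ltcR; lra.
Qed.

Lemma dual_separates_from0 (hX : hausdorff_space X) (z : X) : z != 0 ->
  exists e : X -> R[i], is_dual e /\ 1 <= complex.Re (e z).
Proof.
move=> z0; have [U [U0 cU Uz]] := hausdorff_convex_nbhs0 hX z0.
have [f f_lin [f_le fz]] := hahn_banach z (gauge_sublinear U0 cU).
exists (complexify f); split; last first.
  by rewrite Re_complexify; exact: le_trans (gauge_ge1 U0 cU Uz) fz.
split; last by move=> a x y; exact: complexify_linear.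
apply: complexify_continuous => //.
have UN0 : nbhs 0 [set w | U (- w)].
  by apply: (opp_continuous 0 U); rewrite /= oppr0.
apply: filterS (filterI U0 UN0) => w [Uw UNw] /=.
have fN : f (- w) = - f w.
  by rewrite -scaleN1r -(rmorph1 (real_complex R)) -rmorphN f_lin.2 mulN1r.
have := f_le w; have := f_le (- w); have := gauge_le1 Uw; have := gauge_le1 (U := U) UNw.
by rewrite fN ler_norml; lra.
Qed.

Lemma closure_Re_near (e : X -> R[i]) (E : set X) (p : X) (r : R) :
  continuous e -> closure E p -> 0 < r ->
  exists2 y, E y & `|complex.Re (e y) - complex.Re (e p)| < r.
Proof.
move=> ce Ep r0; have r0C : (0 : R[i]) < r%:C%C by rewrite ltcR.
have := ce p _ (nbhsx_ballx (e p) _ r0C).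
rewrite nbhs_filterE /fmap /preimage /= => pB.
have [y [Ey ey]] := Ep _ pB.
exists y => //; rewrite -ReB; apply: normc_ltR_Re.
by rewrite distrC; exact: ey.
Qed.

End Dual.

Lemma compact_directed_bigcap_closure_neq0 (T : topologicalType) (I : Type)
    (FF : set I) (E : I -> set T) (C : set T) :
  compact C -> FF !=set0 ->
  (forall i j, FF i -> FF j -> exists2 k, FF k & E k `<=` E i `&` E j) ->
  (forall i, FF i -> E i !=set0) -> (forall i, FF i -> E i `<=` C) ->
  \bigcap_(i in FF) closure (E i) !=set0.
Proof.
move=> cC [i0 FFi0] FF_directed E_neq0 EC.
pose G := filter_from FF E.
have G_filter : Filter G.
  apply: filter_from_filter; first by exists i0.
  by move=> i j FFi FFj; have [k FFk Ek] := FF_directed i j FFi FFj; exists k.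
have G_proper : ProperFilter G by apply: filter_from_proper.
have GC : G C by exists i0 => //; exact: EC.
have [p [_ Gp]] := cC G G_proper GC.
by exists p => i FFi B pB; apply: Gp => //; exists i.
Qed.

Section AntisymmetricZFilter.
Variables (R : realType) (Omega : topologicalType) (X : tvsType R[i]).
Variables (A : set (Omega -> R[i])) (v : Omega -> R) (h : Omega -> X).
Variable FF : set (set Omega).
Hypothesis FF_anti : antisymmetric_zfilter A v FF.

Local Notation cluster_set :=
  (\bigcap_(F in FF) closure (h @` (F `&` suppv v))).

Lemma cluster_set_neq0 (C : set X) : compact C ->
  (forall F, FF F -> h @` (F `&` suppv v) `<=` C) -> cluster_set !=set0.
Proof.
move: FF_anti => [[FF_neq0 _ _ FFI _] FF_supp _] cC hC.
apply: compact_directed_bigcap_closure_neq0 cC FF_neq0 _ _ hC.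
  move=> F G FFF FFG; exists (F `&` G); first exact: FFI.
  by move=> _ [x [[Fx Gx] xS] <-]; split; exists x.
by move=> F FFF; have [x Fx] := FF_supp F FFF; exists (h x); exists x.
Qed.

Lemma cluster_set_le1 (hX : hausdorff_space X) : beta_separates A v h ->
  forall p q, cluster_set p -> cluster_set q -> p = q.
Proof.
move=> hsep p q Hp Hq; apply/eqP; apply: contraT => pq.
have /(dual_separates_from0 hX)[e [[ce e_lin] Re_eqp]] : q - p != 0.
  by rewrite subr_eq0 eq_sym.
have eD : e q = e (q - p) + e p by rewrite -[e (q - p)]mul1r -e_lin scale1r subrK.
have third : 0 < 1 / 3 :> R by rewrite divr_gt0.
have near s : cluster_set s -> forall F, FF F -> exists2 x, (F `&` suppv v) x &
    `|complex.Re (e (h x)) - complex.Re (e s)| < 1 / 3.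
  move=> Hs F FFF; have [_ [x Fx <-] ex] := closure_Re_near ce (Hs F FFF) third.
  by exists x.
pose a := complex.Re (e p) + 1 / 3; pose b := complex.Re (e p) + 2 / 3.
have ab : a < b by rewrite ltrD2l ltr_pM2r // ltr1n.
have [F FFF [noLa|noLb]] := hsep FF FF_anti e (conj ce e_lin) a b ab.
- have [x [Fx Sx] ex] := near p Hp F FFF.
  suff : (F `&` [set x | suppv v x /\ complex.Re (e (h x)) <= a]) x by rewrite noLa.
  by split=> //; split=> //; move: ex; rewrite ltr_norml /a; lra.
- have [x [Fx Sx] ex] := near q Hq F FFF.
  suff : (F `&` [set x | suppv v x /\ b <= complex.Re (e (h x))]) x by rewrite noLb.
  split=> //; split=> //; move: ex Re_eqp; rewrite eD ReD ltr_norml /b; lra.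
Qed.

Lemma cluster_set_singleton (hX : hausdorff_space X) (C : set X) : compact C ->
  (forall F, FF F -> h @` (F `&` suppv v) `<=` C) -> beta_separates A v h ->
  exists p, cluster_set = [set p].
Proof.
move=> cC hC hsep; have [p Hp] := cluster_set_neq0 cC hC.
exists p; apply/seteqP; split=> [q Hq|q ->] //.
by apply: (cluster_set_le1 hX hsep); [exact: Hq | exact: Hp].
Qed.

End AntisymmetricZFilter.

Theorem lemma3p5 (R : realType) (Omega : topologicalType) (X : tvsType R[i])
  (hX : hausdorff_space X)
  (A : set (Omega -> R[i])) (hA : forall phi, A phi -> continuous phi)
  (f : Omega -> X) (v : Omega -> R) (hv : forall x, 0 <= v x) :
  (* case of v f *)
  (compact (closure (range (vmul v f))) ->
   {within suppv v, continuous (vmul v f)} ->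
   beta_separates A v (vmul v f) ->
   forall FF : set (set Omega), antisymmetric_zfilter A v FF ->
   exists p : X,
     \bigcap_(F in FF) closure (vmul v f @` (F `&` suppv v)) = [set p])
  /\
  (* "respectively" case of f *)
  (compact (closure (f @` suppv v)) ->
   {within suppv v, continuous f} ->
   beta_separates A v f ->
   forall FF : set (set Omega), antisymmetric_zfilter A v FF ->
   exists p : X,
     \bigcap_(F in FF) closure (f @` (F `&` suppv v)) = [set p]).
Proof.
split=> cC _ hsep FF FF_anti;
  apply: (cluster_set_singleton FF_anti hX cC _ hsep) => F _ _ [x Sx <-];
  apply: subset_closure.
- by exists x.
- by exists x; case: Sx.
Qed.
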